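(* Let $p>2$ be a prime and let $a,b\in\mathbb{C}_p$ with $a\neq0$, $b\neq0$, $a\neq b$, $|2a|_p=|b|_p$ and $|2a-b|_p<|a|_p$. Let $P=-\frac1b$, $D=\mathbb{C}_p\setminus\{P\}$, $f(x)=\frac{ax^2}{bx+1}$ on $D$, $x_1=0$, $x_2=\frac1{a-b}$, and $r_0=\frac{1}{|b|_p}$. Then $x_1$ and $x_2$ are attracting fixed points of $f$, and $$A(x_1)=B_{r_0}(x_1),\qquad A(x_2)=B_{r_0}(x_2).$$
   Context: $\mathbb{C}_p$ is the field of complex $p$-adic numbers with $p$-adic norm $|\cdot|_p$. For $c\in\mathbb{C}_p$, $r>0$: $B_r(c)=\{x:|x-c|_p<r\}$. For $y\in D$, $y^{(n)}=f^n(y)$ is the $n$-th iterate (defined as long as no earlier iterate equals $P$). A fixed point $x^{(0)}$ of $f$ is attracting if $|f'(x^{(0)})|_p<1$. Its basin of attraction is $A(x^{(0)})=\{y: y^{(n)}\text{ defined for all }n,\ y^{(n)}\to x^{(0)}\}$. *)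

From HB Require Import structures.
From mathcomp Require Import all_boot all_order all_algebra.
From mathcomp Require Import reals.
Set Implicit Arguments. Unset Strict Implicit. Unset Printing Implicit Defensive.
Import Order.TTheory GRing.Theory Num.Theory.
Local Open Scope ring_scope.

Definition algebraic_over_Q (K : closedFieldType) (y : K) : Prop :=
  exists q : {poly rat}, q != 0 /\ root (map_poly ratr q) y.

(* (K, abs) is (a model of) the field C_p of complex p-adic numbers with
   its p-adic norm: an algebraically closed field of characteristic 0 with
   a non-archimedean absolute value normalised by |p| = 1/p, complete, and
   in which the algebraic numbers are dense (so K is the completion of an
   algebraic closure of Q_p). *)
Arguments algebraic_over_Q : clear implicits.
Record is_Cp (p : nat) (K : closedFieldType) (R : realType) (abs : K -> R) : Prop := {
  Cp_char0 : [pchar K] =i pred0;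
  Cp_abs_ge0 : forall x, 0 <= abs x;
  Cp_abs_eq0 : forall x, (abs x == 0) = (x == 0);
  Cp_absM : forall x y, abs (x * y) = abs x * abs y;
  Cp_abs_ultra : forall x y, abs (x + y) <= Num.max (abs x) (abs y);
  Cp_abs_p : abs (p%:R) = (p%:R)^-1;
  Cp_complete : forall u : nat -> K,
    (forall eps : R, 0 < eps -> exists N, forall m n, (N <= m)%N -> (N <= n)%N ->
        abs (u m - u n) < eps) ->
    exists l, forall eps : R, 0 < eps -> exists N, forall n, (N <= n)%N -> abs (u n - l) < eps;
  Cp_dense : forall (x : K) (eps : R), 0 < eps ->
    exists y, algebraic_over_Q K y /\ abs (x - y) < eps
}.

Section Dyn.
Variables (K : fieldType) (R : realFieldType) (abs : K -> R).

Definition ball_p (c : K) (r : R) (x : K) : Prop := abs (x - c) < r.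

Definition has_deriv (f : K -> K) (x d : K) : Prop :=
  forall eps : R, 0 < eps -> exists delta : R, 0 < delta /\
    forall h : K, h != 0 -> abs h < delta -> abs ((f (x + h) - f x) / h - d) < eps.

(* f is a map on D = K \ {P}; attracting fixed point in D *)
Definition attracting_fixed_point (f : K -> K) (P x0 : K) : Prop :=
  x0 != P /\ f x0 = x0 /\ exists d, has_deriv f x0 d /\ abs d < 1.

(* basin of attraction: all iterates defined (no iterate hits P) and
   converge to x0 *)
Definition basin (f : K -> K) (P x0 : K) (y : K) : Prop :=
  (forall n, iter n f y != P) /\
  (forall eps : R, 0 < eps -> exists N, forall n, (N <= n)%N -> abs (iter n f y - x0) < eps).
End Dyn.
Arguments is_Cp : clear implicits.
Arguments attracting_fixed_point : clear implicits.
Arguments basin : clear implicits.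
Arguments ball_p : clear implicits.

From HB Require Import structures.
From mathcomp Require Import all_boot all_order all_algebra.
From mathcomp Require Import reals.
From mathcomp Require Import ring lra.
Set Implicit Arguments. Unset Strict Implicit. Unset Printing Implicit Defensive.
Import Order.TTheory GRing.Theory Num.Theory.
Local Open Scope ring_scope.

(* Both fixed points x0 = 0 and x0 = 1/(a - b) of f satisfy
     f x - x0 = (x - x0) (a (x - x0) + c) / (b x + 1),   c = (2a - b) x0,
   with |b x0 + 1| = 1 and |c| < 1; for x0 = 1/(a - b) this is where
   |2a - b| < |a| = |b| enters (|2| = 1 as p is odd).  Put h = x - x0, so that
   b x + 1 = (b x0 + 1) + b h.  If |h| < 1/|b|, the denominator has norm 1 and
   |f x - x0| <= max(|b| |h|, |c|) |h|, so f contracts towards x0, and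
   f'(x0) = c / (b x0 + 1) has norm |c| < 1.  If |h| >= 1/|b|, then
   |a h + c| = |b| |h| >= |b x + 1|, so |f x - x0| >= |h| and the orbit never
   enters the ball. *)

Lemma bernoulli_ler (R : realDomainType) (d : R) n : 0 <= d -> 1 + n%:R * d <= (1 + d) ^+ n.
Proof.
move=> d_ge0; elim: n => [|n IH]; first by rewrite expr0 mul0r addr0.
rewrite exprS -natr1.
have : 0 <= n%:R * d by rewrite mulr_ge0.
nra.
Qed.

Lemma exists_exprn_lt (R : archiRealFieldType) (q eps : R) :
  0 <= q -> q < 1 -> 0 < eps -> exists N, q ^+ N < eps.
Proof.
move=> q_ge0 q_lt1 eps_gt0.
have [->|q_neq0] := eqVneq q 0; first by exists 1%N; rewrite expr1.
have q_gt0 : 0 < q by rewrite lt_def q_neq0.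
pose d := q^-1 - 1.
have d_gt0 : 0 < d by rewrite subr_gt0 invf_gt1.
have bound_ge0 : 0 <= (eps * d)^-1 by rewrite invr_ge0 ltW // mulr_gt0.
set N := Num.Def.archi_bound (eps * d)^-1.
exists N.
have lt_Nd : eps^-1 < N%:R * d.
  have : (eps * d)^-1 * d < N%:R * d by rewrite ltr_pM2r // archi_boundP.
  by rewrite invfM -mulrA mulVf ?gt_eqF // mulr1.
have le_qN : 1 + N%:R * d <= (q ^+ N)^-1.
  have -> : (q ^+ N)^-1 = (1 + d) ^+ N by rewrite -exprVn /d addrC subrK.
  by rewrite bernoulli_ler // ltW.
by rewrite -ltf_pV2 ?posrE ?exprn_gt0 //; lra.
Qed.

Record nonarchimedean_abs (K : fieldType) (R : realFieldType) (abs : K -> R) : Prop := {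
  abs_ge0 : forall x, 0 <= abs x;
  abs_eq0 : forall x, (abs x == 0) = (x == 0);
  absM : forall x y, abs (x * y) = abs x * abs y;
  abs_ultra : forall x y, abs (x + y) <= Num.max (abs x) (abs y) }.

Lemma Cp_nonarchimedean p (K : closedFieldType) (R : realType) (abs : K -> R) :
  is_Cp p K R abs -> nonarchimedean_abs abs.
Proof. by case=> *; split. Qed.

Section NonArchimedean.
Variables (K : fieldType) (R : realFieldType) (abs : K -> R).
Hypothesis nA : nonarchimedean_abs abs.

Lemma abs_gt0 x : (0 < abs x) = (x != 0).
Proof. by rewrite lt_def (abs_eq0 nA) (abs_ge0 nA) andbT. Qed.

Lemma abs0 : abs 0 = 0.
Proof. by apply/eqP; rewrite (abs_eq0 nA). Qed.

Lemma abs1 : abs 1 = 1.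
Proof.
have abs1_neq0 : abs 1 != 0 by rewrite (abs_eq0 nA) oner_eq0.
by apply: (mulIf abs1_neq0); rewrite -(absM nA) !mul1r.
Qed.

Lemma absN x : abs (- x) = abs x.
Proof.
have absN1 : abs (-1) = 1.
  by apply/eqP; rewrite -sqrp_eq1 ?(abs_ge0 nA) // expr2 -(absM nA) mulrNN mulr1 abs1.
by rewrite -mulN1r (absM nA) absN1 mul1r.
Qed.

Lemma absV x : abs x^-1 = (abs x)^-1.
Proof.
have [->|x_neq0] := eqVneq x 0; first by rewrite invr0 abs0 invr0.
apply: (mulfI (_ : abs x != 0)); first by rewrite (abs_eq0 nA).
by rewrite -(absM nA) !mulfV ?abs1 ?(abs_eq0 nA).
Qed.

Lemma absD_le x y r : abs x <= r -> abs y <= r -> abs (x + y) <= r.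
Proof. by move=> hx hy; apply: le_trans (abs_ultra nA x y) _; rewrite ge_max hx. Qed.

Lemma absD_lt x y r : abs x < r -> abs y < r -> abs (x + y) < r.
Proof. by move=> hx hy; apply: le_lt_trans (abs_ultra nA x y) _; rewrite gt_max hx. Qed.

Lemma absD_dominant x y : abs y < abs x -> abs (x + y) = abs x.
Proof.
move=> lt_yx; apply/eqP; rewrite eq_le absD_le ?(ltW lt_yx) //=.
have := abs_ultra nA (x + y) (- y); rewrite addrK absN le_max.
by case/orP=> // le_xy; have := lt_le_trans lt_yx le_xy; rewrite ltxx.
Qed.

Lemma abs_natr_le1 n : abs n%:R <= 1.
Proof.
elim: n => [|n IH]; first by rewrite abs0.
by rewrite -natr1 absD_le // abs1.
Qed.

Lemma abs2_eq1 n : odd n -> abs n%:R < 1 -> abs 2 = 1.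
Proof.
move=> odd_n abs_n_lt1.
apply/eqP; rewrite eq_le abs_natr_le1 leNgt; apply/negP => abs2_lt1.
have one_eq : (1 : K) = n%:R + - (2 * (n./2)%:R).
  by rewrite -{1}(odd_double_half n) odd_n natrD -muln2 natrM /=; ring.
have : abs (1 : K) < 1.
  rewrite one_eq absD_lt // absN (absM nA).
  have := abs_natr_le1 n./2; have := abs_ge0 nA (n./2)%:R; have := abs_ge0 nA 2.
  nra.
by rewrite abs1 ltxx.
Qed.

Lemma abs_mul_lt1 b h : b != 0 -> (abs (b * h) < 1) = (abs h < (abs b)^-1).
Proof. by move=> b_neq0; rewrite -div1r ltr_pdivlMr ?abs_gt0 // (absM nA) mulrC. Qed.

Lemma abs_mul_ge1 b h : b != 0 -> (1 <= abs (b * h)) = ((abs b)^-1 <= abs h).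
Proof. by move=> b_neq0; rewrite -div1r ler_pdivrMr ?abs_gt0 // (absM nA) mulrC. Qed.

End NonArchimedean.

Section Basins.
Variables (K : fieldType) (R : archiRealFieldType) (abs : K -> R).
Hypothesis nA : nonarchimedean_abs abs.
Variables (f : K -> K) (P x0 : K).

Lemma iter_contraction y s q :
  0 <= q -> q <= 1 -> abs (y - x0) <= s ->
  (forall x, abs (x - x0) <= s -> abs (f x - x0) <= q * abs (x - x0)) ->
  forall n, abs (iter n f y - x0) <= q ^+ n * s.
Proof.
move=> q_ge0 q_le1 y_in f_contr.
have s_ge0 : 0 <= s := le_trans (abs_ge0 nA _) y_in.
elim=> [|n IH]; first by rewrite mul1r.
have iter_in : abs (iter n f y - x0) <= s.
  by apply: le_trans IH _; rewrite ler_piMl // exprn_ile1.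
rewrite iterS exprS -mulrA; apply: le_trans (f_contr _ iter_in) _.
exact: ler_wpM2l.
Qed.

Lemma basin_of_contraction y s q :
  0 <= q -> q < 1 -> abs (y - x0) <= s ->
  (forall x, abs (x - x0) <= s -> x != P) ->
  (forall x, abs (x - x0) <= s -> abs (f x - x0) <= q * abs (x - x0)) ->
  basin K R abs f P x0 y.
Proof.
move=> q_ge0 q_lt1 y_in P_out f_contr.
have s_ge0 : 0 <= s := le_trans (abs_ge0 nA _) y_in.
have iter_le := iter_contraction q_ge0 (ltW q_lt1) y_in f_contr.
split=> [n|eps eps_gt0].
  by apply: P_out; apply: le_trans (iter_le n) _; rewrite ler_piMl // exprn_ile1 // ltW.
have s1_gt0 : 0 < 1 + s by rewrite ltr_pwDl.
have [N qN_lt] := exists_exprn_lt q_ge0 q_lt1 (divr_gt0 eps_gt0 s1_gt0).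
exists N => n le_Nn; apply: le_lt_trans (iter_le n) _.
have qn_le : q ^+ n <= q ^+ N by rewrite ler_wiXn2l // ltW.
have : q ^+ N * (1 + s) < eps by rewrite -ltr_pdivlMr.
have := exprn_ge0 n q_ge0.
nra.
Qed.

Lemma basin_sub_ball y r : 0 < r ->
  (forall x, x != P -> r <= abs (x - x0) -> r <= abs (f x - x0)) ->
  basin K R abs f P x0 y -> ball_p K R abs x0 r y.
Proof.
move=> r_gt0 f_out [P_out f_cvg]; rewrite /ball_p ltNge; apply/negP => y_out.
have iter_out n : r <= abs (iter n f y - x0).
  by elim: n => [//|n IH]; rewrite iterS f_out.
have [N cvgN] := f_cvg r r_gt0.
by have := cvgN N (leqnn N); rewrite ltNge iter_out.
Qed.

End Basins.

Section QuadraticMap.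
Variables (K : fieldType) (R : archiRealFieldType) (abs : K -> R).
Hypothesis nA : nonarchimedean_abs abs.
Variables (a b x0 : K).
Hypotheses (b_neq0 : b != 0) (abs_ab : abs a = abs b).

Definition qmap x := a * x ^+ 2 / (b * x + 1).

Lemma neq_pole x : (x != - b^-1) = (b * x + 1 != 0).
Proof.
apply/idP/idP; apply: contra => /eqP x_pole; apply/eqP.
  by rewrite -[x](mulKf b_neq0) -[b * x](addrK 1) x_pole sub0r mulrN1.
by rewrite x_pole mulrN mulfV // addNr.
Qed.

Hypothesis x0_fixed : a * x0 ^+ 2 = x0 * (b * x0 + 1).
Hypothesis abs_den_x0 : abs (b * x0 + 1) = 1.
Hypothesis abs_c_lt1 : abs ((2 * a - b) * x0) < 1.

Local Notation c := ((2 * a - b) * x0).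

Lemma den_shift x : b * x + 1 = (b * x0 + 1) + b * (x - x0).
Proof. by ring. Qed.

Lemma den_x0_neq0 : b * x0 + 1 != 0.
Proof. by rewrite -(abs_gt0 nA) abs_den_x0 ltr01. Qed.

Lemma qmap_fixed : qmap x0 = x0.
Proof. by rewrite /qmap x0_fixed mulfK // den_x0_neq0. Qed.

Lemma qmap_sub_fixed x : b * x + 1 != 0 ->
  qmap x - x0 = (x - x0) * (a * (x - x0) + c) / (b * x + 1).
Proof.
move=> den_neq0; rewrite /qmap.
have -> : a * x ^+ 2 = (x - x0) * (a * (x - x0) + c) + x0 * (b * x + 1).
  apply/eqP; rewrite -subr_eq0.
  have -> : a * x ^+ 2 - ((x - x0) * (a * (x - x0) + c) + x0 * (b * x + 1))
          = a * x0 ^+ 2 - x0 * (b * x0 + 1) by ring.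
  by rewrite x0_fixed subrr.
by rewrite mulrDl mulfK // addrK.
Qed.

Lemma abs_den_near x : abs (x - x0) < (abs b)^-1 -> abs (b * x + 1) = 1.
Proof.
move=> near; rewrite den_shift (absD_dominant nA) // abs_den_x0.
by rewrite (abs_mul_lt1 nA).
Qed.

Lemma qmap_contraction x s : s < (abs b)^-1 -> abs (x - x0) <= s ->
  abs (qmap x - x0) <= Num.max (abs b * s) (abs c) * abs (x - x0).
Proof.
move=> s_lt x_in.
have den1 : abs (b * x + 1) = 1 by apply: abs_den_near; apply: le_lt_trans s_lt.
rewrite qmap_sub_fixed -?(abs_gt0 nA) ?den1 ?ltr01 //.
rewrite (absM nA _ _^-1) (absV nA) den1 invr1 mulr1 (absM nA (x - x0)) mulrC.
rewrite ler_wpM2r ?(abs_ge0 nA) //.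
apply: (absD_le nA); last by rewrite le_max lexx orbT.
by rewrite (absM nA) abs_ab le_max ler_wpM2l ?(abs_ge0 nA).
Qed.

Lemma qmap_dist_nondecr x : b * x + 1 != 0 -> (abs b)^-1 <= abs (x - x0) ->
  abs (x - x0) <= abs (qmap x - x0).
Proof.
move=> den_neq0 far; rewrite qmap_sub_fixed //.
set h := x - x0; move: far; rewrite -/h -(abs_mul_ge1 nA) // (absM nA) => bh_ge1.
have abs_num : abs (a * h + c) = abs b * abs h.
  have c_lt : abs c < abs (a * h) by rewrite (absM nA a) abs_ab (lt_le_trans abs_c_lt1).
  by rewrite (absD_dominant nA c_lt) (absM nA a) abs_ab.
have den_le : abs (b * x + 1) <= abs b * abs h.
  by rewrite den_shift -/h (absD_le nA) ?(absM nA) // abs_den_x0.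
have den_gt0 : 0 < abs (b * x + 1) by rewrite (abs_gt0 nA).
rewrite !(absM nA) (absV nA) abs_num ler_pdivlMr //.
by rewrite ler_wpM2l ?(abs_ge0 nA).
Qed.

(* The factorization of [qmap x - x0] turns the difference quotient at [x0]
   into [(a h + c) / (b x0 + 1 + b h)]. *)
Lemma qmap_has_deriv : has_deriv abs qmap x0 (c / (b * x0 + 1)).
Proof.
move=> eps eps_gt0.
have b_gt0 : 0 < abs b by rewrite (abs_gt0 nA).
exists (Num.min 1 eps / abs b); split; first by rewrite divr_gt0 // lt_min ltr01.
move=> h h_neq0; rewrite ltr_pdivlMr // lt_min => /andP[hb_lt1 hb_lt_eps].
have xh : x0 + h - x0 = h by rewrite addrC addKr.
have den1 : abs (b * (x0 + h) + 1) = 1.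
  by apply: abs_den_near; rewrite xh -(abs_mul_lt1 nA) // (absM nA) mulrC.
have den_neq0 : b * (x0 + h) + 1 != 0 by rewrite -(abs_gt0 nA) den1 ltr01.
rewrite qmap_fixed qmap_sub_fixed // xh.
have -> : h * (a * h + c) / (b * (x0 + h) + 1) / h - c / (b * x0 + 1)
        = h * (a * (b * x0 + 1) - c * b) / ((b * (x0 + h) + 1) * (b * x0 + 1)).
  by field; rewrite h_neq0 den_neq0 den_x0_neq0.
rewrite !(absM nA) (absV nA) (absM nA) den1 abs_den_x0 !mul1r invr1 mulr1.
apply: le_lt_trans hb_lt_eps; apply: ler_wpM2l; first exact: (abs_ge0 nA h).
apply: (absD_le nA); first by rewrite (absM nA a) abs_den_x0 mulr1 abs_ab.
by rewrite (absN nA) (absM nA c) ler_piMl ?(abs_ge0 nA) ?ltW.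
Qed.

Lemma qmap_attracting : attracting_fixed_point K R abs qmap (- b^-1) x0.
Proof.
split; first by rewrite neq_pole den_x0_neq0.
split; first exact: qmap_fixed.
exists (c / (b * x0 + 1)); split; first exact: qmap_has_deriv.
by rewrite (absM nA) (absV nA) abs_den_x0 invr1 mulr1.
Qed.

Lemma qmap_basinE y :
  basin K R abs qmap (- b^-1) x0 y <-> ball_p K R abs x0 (abs b)^-1 y.
Proof.
split.
  apply: basin_sub_ball; first by rewrite invr_gt0 (abs_gt0 nA).
  move=> x; rewrite neq_pole => den_neq0 far.
  exact: le_trans far (qmap_dist_nondecr den_neq0 far).
rewrite /ball_p => y_near.
apply: (basin_of_contraction nA (s := abs (y - x0))
                             (q := Num.max (abs b * abs (y - x0)) (abs c))).
- by rewrite le_max (abs_ge0 nA) orbT.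
- by rewrite gt_max abs_c_lt1 andbT -(absM nA) (abs_mul_lt1 nA).
- exact: lexx.
- move=> x x_in; rewrite neq_pole -(abs_gt0 nA) abs_den_near ?ltr01 //.
  exact: le_lt_trans y_near.
- by move=> x; apply: qmap_contraction.
Qed.

End QuadraticMap.

Theorem theorem3p9 (p : nat) (K : closedFieldType) (R : realType) (abs : K -> R)
  (HK : is_Cp p K R abs) (Hp : prime p) (Hp2 : (2 < p)%N)
  (a b : K) (ha : a != 0) (hb : b != 0) (hab : a != b)
  (h1 : abs (2 * a) = abs b) (h2 : abs (2 * a - b) < abs a) :
  let P := - b^-1 in
  let f := fun x : K => a * x ^+ 2 / (b * x + 1) in
  let x1 : K := 0 in
  let x2 : K := (a - b)^-1 in
  let r0 : R := (abs b)^-1 in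
  attracting_fixed_point K R abs f P x1 /\ attracting_fixed_point K R abs f P x2 /\
  (forall y, basin K R abs f P x1 y <-> ball_p K R abs x1 r0 y) /\
  (forall y, basin K R abs f P x2 y <-> ball_p K R abs x2 r0 y).
Proof.
move=> P f x1 x2 r0.
have nA := Cp_nonarchimedean HK.
have abs_p_lt1 : abs p%:R < 1.
  by rewrite (Cp_abs_p HK) invf_lt1 ?ltr0n ?ltr1n ?prime_gt0 ?prime_gt1.
have odd_p : odd p by case/even_prime: Hp Hp2 => [->|].
have abs_ab : abs a = abs b by rewrite -h1 (absM nA) (abs2_eq1 nA odd_p) // mul1r.
have abs_amb : abs (a - b) = abs a.
  have -> : a - b = - a + (2 * a - b) by ring.
  by rewrite (absD_dominant nA) (absN nA).
have amb_neq0 : a - b != 0 by rewrite subr_eq0.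
have x1_fixed : a * x1 ^+ 2 = x1 * (b * x1 + 1) by rewrite /x1 expr2 !(mulr0, mul0r).
have abs_den_x1 : abs (b * x1 + 1) = 1 by rewrite /x1 mulr0 add0r (abs1 nA).
have abs_c_x1 : abs ((2 * a - b) * x1) < 1 by rewrite /x1 mulr0 (abs0 nA).
have x2_fixed : a * x2 ^+ 2 = x2 * (b * x2 + 1) by rewrite /x2; field.
have abs_den_x2 : abs (b * x2 + 1) = 1.
  have -> : b * x2 + 1 = a / (a - b) by rewrite /x2; field.
  by rewrite (absM nA) (absV nA) abs_amb mulfV // (abs_eq0 nA).
have abs_c_x2 : abs ((2 * a - b) * x2) < 1.
  by rewrite (absM nA) (absV nA) abs_amb mulrC ltr_pdivrMl ?mulr1 ?(abs_gt0 nA).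
split; first exact (qmap_attracting nA hb abs_ab x1_fixed abs_den_x1 abs_c_x1).
split; first exact (qmap_attracting nA hb abs_ab x2_fixed abs_den_x2 abs_c_x2).
split; first exact (qmap_basinE nA hb abs_ab x1_fixed abs_den_x1 abs_c_x1).
exact (qmap_basinE nA hb abs_ab x2_fixed abs_den_x2 abs_c_x2).
Qed.
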